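(* Let $A\in\mathbb{R}^{n\times n}$, $B\in\mathbb{R}^{n\times m}$, $C\in\mathbb{R}^{p\times n}$ with $(A,C)$ observable and $(A,B)$ reachable, let $\ell$ be the observability index of $(A,C)$, and let $\mathbf{A}_\ell,\mathbf{B}_\ell,H_\ell$ be as in the context. Then $\operatorname{im}H_\ell=R(\mathbf{A}_\ell,\mathbf{B}_\ell)$.
   Context: The observability index $\ell$ of an observable pair $(A,C)$ is the smallest $l$ with $\operatorname{rank}[C;CA;\dots;CA^{l-1}]=n$. Define $\mathcal{O}_\ell=[C;CA;\dots;CA^{\ell-1}]\in\mathbb{R}^{p\ell\times n}$; $\mathcal{T}_\ell\in\mathbb{R}^{p\ell\times m\ell}$ block lower triangular with $(i,j)$ block ($i,j=1,\dots,\ell$) equal to $CA^{i-j-1}B$ if $i>j$ and $0$ otherwise; $\mathcal{R}_\ell=[A^{\ell-1}B\ \cdots\ AB\ B]$; $\mathcal{O}_\ell^{L}$ a fixed left inverse ($\mathcal{O}_\ell^L\mathcal{O}_\ell=I_n$). $\mathbf{F}_\ell=\mathrm{blockdiag}(S_p,S_m)$ where $S_q\in\mathbb{R}^{q\ell\times q\ell}$ has blocks $I_q$ in block positions $(i,i+1)$, $i=1,\dots,\ell-1$, zeros elsewhere; $\mathbf{L}_\ell\in\mathbb{R}^{(p\ell+m\ell)\times p}$ has $I_p$ in rows $p\ell-p+1,\dots,p\ell$, zeros elsewhere; $\mathbf{B}_\ell\in\mathbb{R}^{(p\ell+m\ell)\times m}$ has $I_m$ in its last $m$ rows, zeros elsewhere.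 $Z_\ell=[CA^\ell\mathcal{O}_\ell^L\ \ C\mathcal{R}_\ell-CA^\ell\mathcal{O}_\ell^L\mathcal{T}_\ell]$, $\mathbf{A}_\ell=\mathbf{F}_\ell+\mathbf{L}_\ell Z_\ell$. $H_\ell=\begin{bmatrix}\mathcal{O}_\ell&\mathcal{T}_\ell\\0&I_{m\ell}\end{bmatrix}$. For a pair $(M,N)$ with $M$ of size $q\times q$, $R(M,N)=\operatorname{im}[M^{q-1}N\ \cdots\ MN\ N]$ is its reachability subspace. *)

From HB Require Import structures.
From mathcomp Require Import all_boot all_order all_algebra.
Set Implicit Arguments. Unset Strict Implicit. Unset Printing Implicit Defensive.
Import Order.TTheory GRing.Theory Num.Theory.
Local Open Scope ring_scope.

(* Block indexing of 'I_(l*q): index i (0-based) lies in block i %/ q (0-based)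
   at offset i %% q within the block. *)
Definition blk (l q : nat) (i : 'I_(l * q)) : nat := (i %/ q)%N.

Lemma blk_off_proof (l q : nat) (i : 'I_(l * q)) : (i %% q < q)%N.
Proof.
case: q i => [|q] i; last by rewrite ltn_mod.
by case: i => i; rewrite muln0.
Qed.

Definition off (l q : nat) (i : 'I_(l * q)) : 'I_q := Ordinal (blk_off_proof i).

Section Defs.
Variable R : realFieldType.

(* O_l = [C; CA; ...; CA^(l-1)] *)
Definition obsv (l n p : nat) (A : 'M[R]_n) (C : 'M[R]_(p, n)) : 'M[R]_(l * p, n) :=
  \matrix_(i, j) (C *m A ^+ (blk i)) (off i) j.

(* T_l : block (i,j) (0-based) = C A^(i-j-1) B if i > j, else 0 *)
Definition toep (l n m p : nat) (A : 'M[R]_n) (B : 'M[R]_(n, m)) (C : 'M[R]_(p, n))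
  : 'M[R]_(l * p, l * m) :=
  \matrix_(i, j) (if (blk j < blk i)%N
                  then (C *m A ^+ (blk i - blk j - 1) *m B) (off i) (off j)
                  else 0).

(* R_l = [A^(l-1) B ... A B  B] : block j (0-based) = A^(l-1-j) B.
   Also used for the reachability matrix [M^(q-1) N ... M N N]. *)
Definition reachmx (l n m : nat) (A : 'M[R]_n) (B : 'M[R]_(n, m)) : 'M[R]_(n, l * m) :=
  \matrix_(i, j) (A ^+ (l - 1 - blk j) *m B) i (off j).

Definition shiftmx (l q : nat) : 'M[R]_(l * q) :=
  \matrix_(i, j) ((blk j == (blk i).+1) && (off i == off j))%:R.

Definition lastblk (l q : nat) : 'M[R]_(l * q, q) :=
  \matrix_(i, j) ((blk i == l.-1) && (off i == j))%:R.

Definition Fmx (l p m : nat) : 'M[R]_(l * p + l * m) :=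
  block_mx (shiftmx l p) 0 0 (shiftmx l m).

Definition Lmx (l p m : nat) : 'M[R]_(l * p + l * m, p) := col_mx (lastblk l p) 0.

Definition Bmx (l p m : nat) : 'M[R]_(l * p + l * m, m) := col_mx 0 (lastblk l m).

Definition Zmx (l n m p : nat) (A : 'M[R]_n) (B : 'M[R]_(n, m)) (C : 'M[R]_(p, n))
  (OL : 'M[R]_(n, l * p)) : 'M[R]_(p, l * p + l * m) :=
  row_mx (C *m A ^+ l *m OL)
         (C *m reachmx l A B - C *m A ^+ l *m OL *m toep l A B C).

Definition Amx (l n m p : nat) (A : 'M[R]_n) (B : 'M[R]_(n, m)) (C : 'M[R]_(p, n))
  (OL : 'M[R]_(n, l * p)) : 'M[R]_(l * p + l * m) :=
  Fmx l p m + Lmx l p m *m Zmx A B C OL.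

Definition Hmx (l n m p : nat) (A : 'M[R]_n) (B : 'M[R]_(n, m)) (C : 'M[R]_(p, n))
  : 'M[R]_(l * p + l * m, n + l * m) :=
  block_mx (obsv l A C) (toep l A B C) 0 1%:M.

(* column space (image) of X, as the row space of X^T *)
Definition same_image (k a b : nat) (X : 'M[R]_(k, a)) (Y : 'M[R]_(k, b)) : bool :=
  (X^T == Y^T)%MS.

(* reachability subspace R(M,N) = im [M^(q-1)N ... MN N], M : q x q *)
Definition im_eq_reach (k a m : nat) (X : 'M[R]_(k, a)) (M : 'M[R]_k) (N : 'M[R]_(k, m)) : bool :=
  same_image X (reachmx k M N).

Definition observable (n p : nat) (A : 'M[R]_n) (C : 'M[R]_(p, n)) : Prop :=
  \rank (obsv n A C) = n.

Definition reachable (n m : nat) (A : 'M[R]_n) (B : 'M[R]_(n, m)) : Prop :=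
  \rank (reachmx n A B) = n.

Definition is_obs_index (n p : nat) (A : 'M[R]_n) (C : 'M[R]_(p, n)) (l : nat) : Prop :=
  \rank (obsv l A C) = n /\ forall k, (k < l)%N -> \rank (obsv k A C) <> n.

End Defs.

From HB Require Import structures.
From mathcomp Require Import all_boot all_order all_algebra.
From mathcomp Require Import zify.
Set Implicit Arguments. Unset Strict Implicit. Unset Printing Implicit Defensive.
Import Order.TTheory GRing.Theory Num.Theory.
Local Open Scope ring_scope.

(* The output/input windows intertwine the two realizations: Amx *m Hmx =
   Hmx *m augA and Bmx = Hmx *m augB, where (augA, augB) is the system whose
   state is x together with a window of l past inputs.  Hence the reachability
   matrix of (Amx, Bmx) is Hmx times that of (augA, augB), and it is enough that
   the latter has full row rank.  Its first l Krylov blocks are the unit block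
   columns [0; E_(l-1-k)], which span the input window, and the following ones
   are [A^k B; 0], which span the x-component because (A, B) is reachable; the
   l p + l m available powers cover the l + n needed ones since n <= l p. *)

Lemma blk_lt (l q : nat) (i : 'I_(l * q)) : (blk i < l)%N.
Proof.
case: q i => [|q] i; first by have := ltn_ord i; lia.
by rewrite /blk ltn_divLR.
Qed.

Lemma eq_blk_off (l q : nat) (i j : 'I_(l * q)) :
  (i == j) = (blk i == blk j) && (off i == off j).
Proof.
apply/eqP/andP => [-> // | [/eqP bij /eqP oij]]; apply/val_inj.
have oij' : (i %% q = j %% q)%N by have := congr1 val oij.
by rewrite /= (divn_eq i q) (divn_eq j q) oij'; move: bij; rewrite /blk => ->.
Qed.

Lemma exists_blk (l q a : nat) (r : 'I_q) : (a < l)%N ->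
  exists k : 'I_(l * q), blk k = a /\ off k = r.
Proof.
move=> lt_al; have q_gt0 : (0 < q)%N by apply: leq_ltn_trans (ltn_ord r).
have lt_k : (a * q + r < l * q)%N by have := ltn_ord r; nia.
exists (Ordinal lt_k); split; first by rewrite /blk /= divnMDl // divn_small // addn0.
by apply/val_inj; rewrite /= modnMDl modn_small.
Qed.

Section Windows.
Variable R : realFieldType.

Lemma sum_blk (l q a : nat) (r : 'I_q) (G : nat -> 'I_q -> R) :
  \sum_(k : 'I_(l * q)) ((blk k == a) && (off k == r))%:R * G (blk k) (off k)
  = if (a < l)%N then G a r else 0.
Proof.
case: ifP => lt_al; last first.
  rewrite big1 // => k _; case: eqP => [ka|_]; last by rewrite mul0r.
  by have := blk_lt k; rewrite ka lt_al.
have [k0 [k0a k0r]] := exists_blk r lt_al.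
rewrite (bigD1 k0) //= k0a k0r !eqxx mul1r big1 ?addr0 // => k.
by rewrite eq_blk_off k0a k0r => /negbTE ->; rewrite mul0r.
Qed.

Definition delta_blk (l q c : nat) : 'M[R]_(l * q, q) :=
  \matrix_(i, j) ((blk i == c) && (off i == j))%:R.

Lemma lastblkE (l q : nat) : lastblk R l q = delta_blk l q l.-1.
Proof. by apply/matrixP => i j; rewrite !mxE. Qed.

Lemma mul_delta_blk (l q k c : nat) (Y : 'M[R]_(q, k)) i j :
  (delta_blk l q c *m Y) i j = if blk i == c then Y (off i) j else 0.
Proof.
rewrite mxE; under eq_bigr => s _ do rewrite mxE.
case: (blk i == c) => /=; last by rewrite big1 // => s _; rewrite mul0r.
rewrite (bigD1 (off i)) //= eqxx mul1r big1 ?addr0 // => s /negbTE s_ne.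
by rewrite eq_sym s_ne mul0r.
Qed.

Lemma mul_tr_delta_blk (l q k c : nat) (X : 'M[R]_(k, q)) i j :
  (X *m (delta_blk l q c)^T) i j = if blk j == c then X i (off j) else 0.
Proof. by rewrite -[X *m _]trmxK trmx_mul trmxK mxE mul_delta_blk mxE. Qed.

Lemma mulmx_delta_blk (l q k c : nat) (X : 'M[R]_(k, l * q))
    (G : 'I_k -> nat -> 'I_q -> R) :
  (forall i j, X i j = G i (blk j) (off j)) -> forall i j,
  (X *m delta_blk l q c) i j = if (c < l)%N then G i c j else 0.
Proof.
move=> XG i j; rewrite mxE -(@sum_blk l q c j (G i)).
by apply: eq_bigr => s _; rewrite mxE XG mulrC.
Qed.

Lemma mul_shiftmx (l q k : nat) (X : 'M[R]_(l * q, k)) (G : nat -> 'I_q -> 'I_k -> R) :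
  (forall i j, X i j = G (blk i) (off i) j) -> forall i j,
  (shiftmx R l q *m X) i j = if ((blk i).+1 < l)%N then G (blk i).+1 (off i) j else 0.
Proof.
move=> XG i j; rewrite mxE -(@sum_blk l q (blk i).+1 (off i) (fun a r => G a r j)).
by apply: eq_bigr => s _; rewrite mxE XG (eq_sym (off i)).
Qed.

Lemma mulmx_shiftmx (l q k : nat) (X : 'M[R]_(k, l * q)) (G : 'I_k -> nat -> 'I_q -> R) :
  (forall i j, X i j = G i (blk j) (off j)) -> forall i j,
  (X *m shiftmx R l q) i j = if (0 < blk j)%N then G i (blk j).-1 (off j) else 0.
Proof.
move=> XG i j; rewrite mxE.
rewrite (eq_bigr (fun s => ((blk s == (blk j).-1) && (off s == off j))%:R *
   ((0 < blk j)%N%:R * G i (blk s) (off s)))); last first.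
  move=> s _; rewrite mxE XG.
  case: (blk j) => [|b] /=; first by rewrite !(mulr0, mul0r, andbF).
  by rewrite mul1r eqSS mulrC (eq_sym b).
rewrite (@sum_blk l q _ _ (fun a r => (0 < blk j)%N%:R * G i a r)).
rewrite (leq_ltn_trans (leq_pred _) (blk_lt j)).
by case: (0 < blk j)%N; rewrite ?mul1r ?mul0r.
Qed.

Lemma shiftmx_delta_blk (l q c : nat) : (c < l)%N ->
  shiftmx R l q *m delta_blk l q c = if c == 0%N then 0 else delta_blk l q c.-1.
Proof.
move=> lt_cl; apply/matrixP => i j.
rewrite (@mul_shiftmx l q _ _ (fun a r j => ((a == c) && (r == j))%:R)); last first.
  by move=> k j'; rewrite mxE.
have := blk_lt i; case: (ltnP (blk i).+1 l) => lt_il ?; case: (c =P 0%N) => c0;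
  rewrite ?mxE //.
- by rewrite c0.
- by rewrite (_ : ((blk i).+1 == c) = (blk i == c.-1)) //; apply/eqP/eqP; lia.
- by rewrite (_ : (blk i == c.-1) = false) //; apply/negP => /eqP; lia.
Qed.

Lemma tr_delta_blk0_mul (l q c : nat) : (c < l)%N ->
  (delta_blk l q 0)^T *m delta_blk l q c = ((c == 0%N)%:R)%:M.
Proof.
move=> lt_cl; apply/matrixP => r s.
rewrite (@mulmx_delta_blk l q _ _ _ (fun r a s' => ((a == 0%N) && (s' == r))%:R));
  last by move=> r' k; rewrite !mxE.
by rewrite lt_cl !mxE (eq_sym s); case: (c == 0%N); rewrite ?mul0rn.
Qed.

Lemma obsv_mulmxE (l n p k : nat) (A : 'M[R]_n) (C : 'M[R]_(p, n)) (X : 'M[R]_(n, k)) i j :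
  (obsv l A C *m X) i j = (C *m A ^+ blk i *m X) (off i) j.
Proof. by rewrite !mxE; apply: eq_bigr => s _; rewrite mxE. Qed.

Lemma mulmx_reachmxE (l n m p : nat) (A : 'M[R]_n) (B : 'M[R]_(n, m))
    (C : 'M[R]_(p, n)) i j :
  (C *m reachmx l A B) i j = (C *m A ^+ (l - 1 - blk j) *m B) i (off j).
Proof. by rewrite -mulmxA !mxE; apply: eq_bigr => s _; rewrite mxE. Qed.

Lemma shiftmx_obsv (l n p : nat) (A : 'M[R]_n) (C : 'M[R]_(p, n)) :
  shiftmx R l p *m obsv l A C + lastblk R l p *m (C *m A ^+ l) = obsv l A C *m A.
Proof.
apply/matrixP => i j; rewrite mxE obsv_mulmxE lastblkE mul_delta_blk.
rewrite (@mul_shiftmx l p n _ (fun a r j => (C *m A ^+ a) r j));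
  last by move=> k j'; rewrite mxE.
rewrite exprSr -mulmxE mulmxA.
have := blk_lt i; case: (ltnP (blk i).+1 l) => lt_il ?.
  by rewrite (_ : (blk i == l.-1) = false) ?addr0 //; apply/negP => /eqP; lia.
have il : blk i = l.-1 by lia.
have AA : A ^+ blk i *m A = A ^+ l by rewrite mulmxE -exprSr il prednK //; lia.
by rewrite il eqxx add0r -il -mulmxA AA.
Qed.

Lemma shiftmx_toep (l n m p : nat) (A : 'M[R]_n) (B : 'M[R]_(n, m)) (C : 'M[R]_(p, n)) :
  shiftmx R l p *m toep l A B C + lastblk R l p *m (C *m reachmx l A B)
  = obsv l A C *m (B *m (delta_blk l m 0)^T) + toep l A B C *m shiftmx R l m.
Proof.
apply/matrixP => i j; rewrite mxE [RHS]mxE lastblkE mul_delta_blk mulmx_reachmxE.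
rewrite (@mul_shiftmx l p _ _ (fun a r j => if (blk j < a)%N then
   (C *m A ^+ (a - blk j - 1) *m B) r (off j) else 0)); last by move=> k j'; rewrite mxE.
rewrite mulmxA mul_tr_delta_blk obsv_mulmxE.
rewrite (@mulmx_shiftmx l m _ _ (fun i a r => if (a < blk i)%N then
   (C *m A ^+ (blk i - a - 1) *m B) (off i) r else 0)); last by move=> i' k; rewrite mxE.
have := blk_lt i; have := blk_lt j; move: (blk i) (blk j) => a b lt_al lt_bl.
have CAB e1 e2 : e1 = e2 ->
  (C *m A ^+ e1 *m B) (off i) (off j) = (C *m A ^+ e2 *m B) (off i) (off j).
  by move=> ->.
by repeat case: ifP => ?; rewrite ?addr0 ?add0r //; (apply: CAB || exfalso); lia.
Qed.

Lemma toep_lastblk (l n m p : nat) (A : 'M[R]_n) (B : 'M[R]_(n, m)) (C : 'M[R]_(p, n)) :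
  toep l A B C *m lastblk R l m = 0.
Proof.
apply/matrixP => i j; rewrite [RHS]mxE lastblkE.
rewrite (@mulmx_delta_blk l m _ l.-1 _ (fun i a r => if (a < blk i)%N then
   (C *m A ^+ (blk i - a - 1) *m B) (off i) r else 0)); last by move=> i' k; rewrite mxE.
by have := blk_lt i; case: ifP => // _ ?; case: ifP => // ?; lia.
Qed.

(* The state of (augA, augB) is the state x at the start of a window of l
   inputs together with those inputs, oldest first; Hmx maps it to the output
   and input windows it produces. *)
Definition augA (l n m : nat) (A : 'M[R]_n) (B : 'M[R]_(n, m)) : 'M[R]_(n + l * m) :=
  block_mx A (B *m (delta_blk l m 0)^T) 0 (shiftmx R l m).

Definition augB (l n m : nat) : 'M[R]_(n + l * m, m) := col_mx 0 (delta_blk l m l.-1).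

Lemma Amx_Hmx (l n m p : nat) (A : 'M[R]_n) (B : 'M[R]_(n, m)) (C : 'M[R]_(p, n))
    (OL : 'M[R]_(n, l * p)) :
  OL *m obsv l A C = 1%:M -> Amx A B C OL *m Hmx l A B C = Hmx l A B C *m augA l A B.
Proof.
move=> OLK; rewrite /Amx /Fmx /Lmx /Zmx /Hmx /augA mul_col_row !mul0mx add_block_mx.
rewrite !addr0 !mulmx_block !mulmx0 !mul0mx !addr0 !add0r !mulmx1 !mul1mx.
congr block_mx; first by rewrite mulmxDl -!mulmxA OLK mulmx1 shiftmx_obsv.
rewrite mulmxDl mulmxBr !mulmxA [_ - _]addrC addrA addrK -mulmxA -[_ *m B *m _]mulmxA.
exact: shiftmx_toep.
Qed.

Lemma Bmx_Hmx (l n m p : nat) (A : 'M[R]_n) (B : 'M[R]_(n, m)) (C : 'M[R]_(p, n)) :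
  Bmx R l p m = Hmx l A B C *m augB l n m.
Proof.
by rewrite /Bmx /Hmx /augB mul_block_col !mulmx0 !add0r mul1mx -lastblkE toep_lastblk.
Qed.

Lemma reachmx_mulmx (k k' m N : nat) (M1 : 'M[R]_k) (M2 : 'M[R]_k')
    (H : 'M[R]_(k, k')) (N2 : 'M[R]_(k', m)) :
  M1 *m H = H *m M2 -> reachmx N M1 (H *m N2) = H *m reachmx N M2 N2.
Proof.
move=> M12; have powM12 e : M1 ^+ e *m H = H *m M2 ^+ e.
  elim: e => [|e IH]; first by rewrite !expr0 mul1mx mulmx1.
  by rewrite !exprS -!mulmxE -mulmxA IH mulmxA M12 mulmxA.
apply/matrixP => i j; rewrite [LHS]mxE mulmxA powM12 -mulmxA !mxE.
by apply: eq_bigr => s _; rewrite /reachmx mxE.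
Qed.

Lemma augA_mul_col_mx (l n m c : nat) (A : 'M[R]_n) (B : 'M[R]_(n, m))
    (X : 'M[R]_(n, m)) : (c < l)%N ->
  augA l A B *m col_mx X (delta_blk l m c) =
  col_mx (A *m X + (if c == 0%N then B else 0))
         (if c == 0%N then 0 else delta_blk l m c.-1).
Proof.
move=> lt_cl; rewrite /augA mul_block_col mul0mx add0r -mulmxA.
rewrite tr_delta_blk0_mul // shiftmx_delta_blk // mul_mx_scalar.
by case: (c == 0%N); rewrite ?scale1r ?scale0r.
Qed.

Lemma augA_pow_augB_lt (l n m k : nat) (A : 'M[R]_n) (B : 'M[R]_(n, m)) : (k < l)%N ->
  augA l A B ^+ k *m augB l n m = col_mx 0 (delta_blk l m (l.-1 - k)).
Proof.
elim: k => [|k IH] lt_kl; first by rewrite expr0 mul1mx subn0.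
rewrite exprS -mulmxE -mulmxA IH; last by lia.
rewrite augA_mul_col_mx; last by lia.
have -> : ((l.-1 - k)%N == 0%N) = false by apply/negP => /eqP; lia.
by rewrite mulmx0 addr0; congr (col_mx _ (delta_blk _ _ _)); lia.
Qed.

Lemma augA_pow_augB_ge (l n m k : nat) (A : 'M[R]_n) (B : 'M[R]_(n, m)) : (0 < l)%N ->
  augA l A B ^+ (l + k) *m augB l n m = col_mx (A ^+ k *m B) 0.
Proof.
move=> l_gt0; elim: k => [|k IH].
  rewrite addn0 -(prednK l_gt0) exprS -mulmxE -mulmxA augA_pow_augB_lt ?prednK //.
  by rewrite subnn augA_mul_col_mx // eqxx mulmx0 add0r expr0 mul1mx.
rewrite addnS exprS -mulmxE -mulmxA IH /augA mul_block_col !mulmx0 !addr0 mul0mx.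
by rewrite mulmxA mulmxE -exprS.
Qed.

Lemma blk_rows_mul_sub (l q k c r : nat) (Y : 'M[R]_(l * q, k)) (F : nat -> 'M[R]_(q, k))
    (P : 'M[R]_(k, c)) (X : 'M[R]_(r, c)) :
  (forall i, row i Y = row (off i) (F (blk i))) ->
  (forall b, (b < l)%N -> (F b *m P <= X)%MS) -> (Y *m P <= X)%MS.
Proof.
move=> YF FP; apply/row_subP => i; rewrite row_mul YF -row_mul.
exact: submx_trans (row_sub _ _) (FP _ (blk_lt i)).
Qed.

Lemma tr_delta_blk_mul_sub (l q c r : nat) (P : 'M[R]_(l * q, c)) (X : 'M[R]_(r, c)) :
  (forall b, (b < l)%N -> ((delta_blk l q b)^T *m P <= X)%MS) -> (P <= X)%MS.
Proof.
move=> EP; rewrite -[P]mul1mx.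
apply: (blk_rows_mul_sub (F := fun b => (delta_blk l q b)^T)) EP => i.
by apply/rowP => j; rewrite !mxE eq_blk_off (eq_sym (blk j)) (eq_sym (off j)).
Qed.

Lemma reachmx_mul_sub (N n m c r : nat) (M : 'M[R]_n) (N' : 'M[R]_(n, m))
    (P : 'M[R]_(n, c)) (X : 'M[R]_(r, c)) :
  (forall k, (k < N)%N -> ((M ^+ k *m N')^T *m P <= X)%MS) ->
  ((reachmx N M N')^T *m P <= X)%MS.
Proof.
move=> powP; apply: (blk_rows_mul_sub (F := fun b => (M ^+ (N - 1 - b) *m N')^T)).
  by move=> i; apply/rowP => j; rewrite !mxE.
by move=> b lt_bN; apply: powP; lia.
Qed.

Lemma pow_sub_reachmx (N n m k : nat) (M : 'M[R]_n) (N' : 'M[R]_(n, m)) : (k < N)%N ->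
  ((M ^+ k *m N')^T <= (reachmx N M N')^T)%MS.
Proof.
move=> lt_kN; apply/row_subP => r.
have [j [jb jr]] : exists j : 'I_(N * m), blk j = (N - 1 - k)%N /\ off j = r.
  by apply: exists_blk; lia.
suff -> : row r (M ^+ k *m N')^T = row j (reachmx N M N')^T by apply: row_sub.
apply/rowP => i; rewrite !mxE jb jr (_ : (N - 1 - (N - 1 - k) = k)%N) //; lia.
Qed.

Lemma augA_augB_reach_full (l n m N : nat) (A : 'M[R]_n) (B : 'M[R]_(n, m)) :
  reachable A B -> (0 < l)%N -> (l + n <= N)%N ->
  row_full (reachmx N (augA l A B) (augB l n m))^T.
Proof.
move=> reachAB l_gt0 le_lnN; rewrite -sub1mx scalar_mx_block col_mx_sub.
apply/andP; split.
  have: (1%:M <= (reachmx n A B)^T)%MS by rewrite sub1mx /row_full mxrank_tr reachAB.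
  move=> /(submxMr (row_mx 1%:M 0 : 'M_(n, n + l * m))).
  rewrite mul1mx => /submx_trans; apply.
  apply: reachmx_mul_sub => k lt_kn.
  have := @pow_sub_reachmx N _ _ (l + k) (augA l A B) (augB l n m) (ltac:(lia)).
  by rewrite augA_pow_augB_ge // tr_col_mx trmx0 mul_mx_row mulmx1 mulmx0.
apply: tr_delta_blk_mul_sub => c lt_cl.
have := @pow_sub_reachmx N _ _ (l.-1 - c) (augA l A B) (augB l n m) (ltac:(lia)).
rewrite augA_pow_augB_lt; last by lia.
by rewrite (_ : l.-1 - (l.-1 - c) = c)%N ?tr_col_mx ?trmx0 ?mul_mx_row ?mulmx1 ?mulmx0 //; lia.
Qed.

End Windows.

Theorem lemma1 (R : realFieldType) (n m p : nat)
  (A : 'M[R]_n) (B : 'M[R]_(n, m)) (C : 'M[R]_(p, n)) (l : nat)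
  (OL : 'M[R]_(n, l * p)) :
  observable A C -> reachable A B -> is_obs_index A C l ->
  OL *m obsv l A C = 1%:M ->
  im_eq_reach (Hmx l A B C) (Amx A B C OL) (Bmx R l p m).
Proof.
move=> _ reachAB [rankO _] OLK.
have le_n_lp : (n <= l * p)%N by rewrite -rankO rank_leq_row.
have full : row_full (reachmx (l * p + l * m) (augA l A B) (augB R l n m))^T.
  have [lm0 | ] := posnP (l * m); last first.
    rewrite muln_gt0 => /andP [l_gt0 m_gt0].
    by apply: augA_augB_reach_full => //; nia.
  (* l m = 0 forces n = 0: the augmented state space is trivial. *)
  have := rank_leq_col (reachmx n A B); rewrite reachAB => le_n_nm.
  by rewrite /row_full eqn_leq rank_leq_col /=; nia.
rewrite /im_eq_reach /same_image (Bmx_Hmx l A B C).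
rewrite (reachmx_mulmx _ _ (Amx_Hmx B OLK)).
by rewrite trmx_mul; apply/eqmxP/eqmx_sym/eqmxMfull.
Qed.
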